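(* For every knot type $[K]$, $\dfrac{3+\sqrt{9+8\,c[K]}}{2}\le \mathrm{pl}[K]$, where $c[K]$ is the crossing number of $[K]$.
   Context: The crossing number $c[K]$ is the minimum number of crossings in a diagram of $[K]$. A planar stick diagram of $[K]$ is a closed polygonal curve in the plane (finitely many straight line segments, called edges, joined end to end), whose self-intersections are transverse double points in the interiors of edges, with over/under crossing information at each self-intersection, representing $[K]$. The planar stick index $\mathrm{pl}[K]$ is the smallest number of edges in any planar stick diagram of $[K]$. *)

From HB Require Import structures.
From mathcomp Require Import all_boot all_order all_algebra.
From mathcomp Require Import all_classical all_reals all_analysis.
Set Implicit Arguments. Unset Strict Implicit. Unset Printing Implicit Defensive.
Import Order.TTheory GRing.Theory Num.Theory.
Import numFieldNormedType.Exports.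
Local Open Scope classical_set_scope.
Local Open Scope ring_scope.

Section Knots.
Variable R : realType.

Definition P2 := (R * R)%type.
Definition P3 := (R * R * R)%type.

Definition lerp2 (a b : P2) (t : R) : P2 :=
  ((1 - t) * a.1 + t * b.1, (1 - t) * a.2 + t * b.2).
Definition lerp3 (a b : P3) (t : R) : P3 :=
  (lerp2 a.1 b.1 t, (1 - t) * a.2 + t * b.2).

Definition vtx2 (q : seq P2) (i : nat) : P2 := nth (0, 0) q (i %% size q).
Definition vtx3 (q : seq P3) (i : nat) : P3 := nth (0, 0, 0) q (i %% size q).

Definition edge2 (q : seq P2) (i : nat) : set P2 :=
  [set p | exists t, 0 <= t <= 1 /\ p = lerp2 (vtx2 q i) (vtx2 q i.+1) t].
Definition edge_interior2 (q : seq P2) (i : nat) : set P2 :=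
  [set p | exists t, 0 < t < 1 /\ p = lerp2 (vtx2 q i) (vtx2 q i.+1) t].
Definition edge3 (q : seq P3) (i : nat) : set P3 :=
  [set p | exists t, 0 <= t <= 1 /\ p = lerp3 (vtx3 q i) (vtx3 q i.+1) t].

Definition follows (n i j : nat) : Prop := j = (i.+1 %% n)%N.
Definition nonadjacent (n i j : nat) : Prop :=
  i <> j /\ ~ follows n i j /\ ~ follows n j i.

Definition PL_knot (K : seq P3) : Prop :=
  let n := size K in
  [/\ (3 <= n)%N,
      (forall i, (i < n)%N -> vtx3 K i <> vtx3 K i.+1),
      (forall i j, (i < n)%N -> (j < n)%N -> follows n i j ->
          edge3 K i `&` edge3 K j = [set vtx3 K j]) &
      (forall i j, (i < n)%N -> (j < n)%N -> nonadjacent n i j ->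
          edge3 K i `&` edge3 K j = set0)].

Definition knot_set (K : seq P3) : set P3 :=
  [set x | exists i, (i < size K)%N /\ edge3 K i x].

Definition ambient_isotopic (A B : set P3) : Prop :=
  exists H : R * P3 -> P3,
    [/\ {within [set p : R * P3 | 0 <= p.1 <= 1], continuous H},
        (forall x, H (0, x) = x),
        (forall t, 0 <= t <= 1 -> exists g : P3 -> P3,
            [/\ continuous g, cancel (fun x => H (t, x)) g &
                cancel g (fun x => H (t, x))]) &
        (fun x => H (1, x)) @` A = B].

Definition planar_stick_polygon (q : seq P2) : Prop :=
  let n := size q in
  [/\ (3 <= n)%N,
      (forall i, (i < n)%N -> vtx2 q i <> vtx2 q i.+1),
      (forall i j, (i < n)%N -> (j < n)%N -> follows n i j ->
          edge2 q i `&` edge2 q j = [set vtx2 q j]),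
      (forall i j, (i < n)%N -> (j < n)%N -> nonadjacent n i j ->
          forall p, edge2 q i p -> edge2 q j p ->
            [/\ edge_interior2 q i p, edge_interior2 q j p &
                forall p', edge2 q i p' -> edge2 q j p' -> p' = p]) &
      (forall i j k, (i < n)%N -> (j < n)%N -> (k < n)%N ->
          i <> j -> j <> k -> i <> k ->
          edge2 q i `&` edge2 q j `&` edge2 q k = set0)].

(* Over/under information is given by a lift: a continuous height function
   h i on each edge i (parameter t in [0,1]), glued at the vertices, such that
   the two strands at each crossing get different heights. *)
Definition stick_lift (q : seq P2) (h : nat -> R -> R) : Prop :=
  let n := size q in
  [/\ (forall i, (i < n)%N -> {within `[0, 1], continuous (h i)}),
      (forall i, (i < n)%N -> h i 1 = h (i.+1 %% n)%N 0) &
      (forall i j, (i < n)%N -> (j < n)%N -> nonadjacent n i j ->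
          forall t u, 0 <= t <= 1 -> 0 <= u <= 1 ->
            lerp2 (vtx2 q i) (vtx2 q i.+1) t = lerp2 (vtx2 q j) (vtx2 q j.+1) u ->
            h i t <> h j u)].

Definition lift_set (q : seq P2) (h : nat -> R -> R) : set P3 :=
  [set x | exists i t, [/\ (i < size q)%N, 0 <= t <= 1 &
       x = (lerp2 (vtx2 q i) (vtx2 q i.+1) t, h i t)]].

Definition stick_diagram_of (K : seq P3) (q : seq P2) (h : nat -> R -> R) : Prop :=
  [/\ planar_stick_polygon q, stick_lift q h &
      ambient_isotopic (lift_set q h) (knot_set K)].

Definition ncrossings (q : seq P2) : nat :=
  #|[set p : 'I_(size q) * 'I_(size q) | (p.1 < p.2)%N &&
     `[< nonadjacent (size q) p.1 p.2 /\ exists x, edge2 q p.1 x /\ edge2 q p.2 x >]]|.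

Definition crossing_number (K : seq P3) : R :=
  inf [set x : R | exists q h, stick_diagram_of K q h /\ x = (ncrossings q)%:R].

Definition planar_stick_index (K : seq P3) : R :=
  inf [set x : R | exists q h, stick_diagram_of K q h /\ x = (size q)%:R].

End Knots.

From HB Require Import structures.
From mathcomp Require Import all_boot all_order all_algebra.
From mathcomp Require Import all_classical all_reals all_analysis.
From mathcomp Require Import ring lra zify.
Import Order.TTheory GRing.Theory Num.Theory.
Import numFieldNormedType.Exports.
Set Implicit Arguments. Unset Strict Implicit. Unset Printing Implicit Defensive.
Local Open Scope ring_scope.

(* Every edge of a planar stick diagram with [n] edges can cross only the [n - 3]
   edges not adjacent to it, so a diagram has at most [n (n - 3) / 2] crossings
   and [c[K] <= n (n - 3) / 2]; solving for [n] bounds the size of every diagram,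
   hence [pl[K]] as soon as one diagram exists.  One is obtained by projecting [K]
   obliquely, [(x, y, z) |-> (x + a z, y + b z)], and lifting by the height [z];
   the shear [(x, y, z) |-> (x - s a z, y - s b z, z)] is the isotopy.  Each
   degeneracy of the shadow (a collapsed edge, a vertex on a non-incident edge, a
   triple point) is the vanishing at [(a, b)] of a polynomial in [(a, b)] that is
   not identically zero for an embedded polygon, and finitely many nonzero
   bivariate polynomials have a common non-root. *)

Definition mk3 (R : realType) (x y z : R) : P3 R := ((x, y), z).
Definition sub3 (R : realType) (p q : P3 R) : P3 R :=
  mk3 (p.1.1 - q.1.1) (p.1.2 - q.1.2) (p.2 - q.2).

Lemma mk3E (R : realType) (p : P3 R) : p = mk3 p.1.1 p.1.2 p.2.
Proof. by case: p => [[]]. Qed.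

Lemma mk3_inj (R : realType) (x y z x' y' z' : R) :
  mk3 x y z = mk3 x' y' z' -> [/\ x = x', y = y' & z = z'].
Proof. by case. Qed.

Lemma pairE (T U : Type) (x1 y1 : T) (x2 y2 : U) :
  (x1, x2) = (y1, y2) <-> x1 = y1 /\ x2 = y2.
Proof. by split => [[-> ->]|[-> ->]]. Qed.

(* The oblique projection (x, y, z) |-> (x + a z, y + b z) along (-a, -b, 1),
   with coordinates pushed by [e] into a ring [T]: for [T = R] these are actual
   projections, for [T] the bivariate polynomials they are polynomials in [a, b]. *)
Section ObliqueProjection.
Variables (R : realType) (T : comNzRingType) (e : R -> T) (a b : T).

Definition obl_x (p : P3 R) : T := e p.1.1 + a * e p.2.
Definition obl_y (p : P3 R) : T := e p.1.2 + b * e p.2.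
Definition obl_cross (p q : P3 R) : T := obl_x p * obl_y q - obl_y p * obl_x q.
Definition obl_norm2 (p : P3 R) : T := obl_x p ^+ 2 + obl_y p ^+ 2.

(* Vanishes when the projections of the lines [vi + R Ei], [vj + R Ej],
   [vk + R Ek] are concurrent (for pairwise non-parallel projections). *)
Definition triple_form (vi Ei vj Ej vk Ek : P3 R) : T :=
  obl_cross Ej (sub3 vi vj) * obl_cross Ek Ei
  - obl_cross Ek (sub3 vi vk) * obl_cross Ej Ei.

End ObliqueProjection.

Section ObliqueProjectionMorphism.
Variables (R : realType) (T T' : comNzRingType) (f : {rmorphism T -> T'}).
Variables (e : R -> T) (e' : R -> T').
Hypothesis fe : forall c, f (e c) = e' c.

Lemma rmorph_obl_x a p : f (obl_x e a p) = obl_x e' (f a) p.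
Proof. by rewrite /obl_x rmorphD rmorphM !fe. Qed.

Lemma rmorph_obl_y b p : f (obl_y e b p) = obl_y e' (f b) p.
Proof. by rewrite /obl_y rmorphD rmorphM !fe. Qed.

Lemma rmorph_obl_cross a b p q : f (obl_cross e a b p q) = obl_cross e' (f a) (f b) p q.
Proof. by rewrite /obl_cross rmorphB !rmorphM !rmorph_obl_x !rmorph_obl_y. Qed.

Lemma rmorph_obl_norm2 a b p : f (obl_norm2 e a b p) = obl_norm2 e' (f a) (f b) p.
Proof. by rewrite /obl_norm2 rmorphD !rmorphXn rmorph_obl_x rmorph_obl_y. Qed.

Lemma rmorph_triple_form a b vi Ei vj Ej vk Ek :
  f (triple_form e a b vi Ei vj Ej vk Ek) = triple_form e' (f a) (f b) vi Ei vj Ej vk Ek.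
Proof. by rewrite /triple_form rmorphB !rmorphM !rmorph_obl_cross. Qed.

End ObliqueProjectionMorphism.

Section BivariateNonroot.
Variable R : numDomainType.

Lemma poly_exists_nonroot (p : {poly R}) : p != 0 -> exists x, ~~ root p x.
Proof.
move=> p0; apply/not_existsP => /= allroot.
have := max_poly_roots p0 (rs := [seq i%:R | i <- iota 0 (size p)]).
rewrite size_map size_iota ltnn => noroots; apply: notF; apply: noroots.
  apply/allP => x /mapP [i _ ->]; apply: contrapT => /negP; exact: allroot.
by rewrite map_inj_uniq ?iota_uniq // => i j /eqP; rewrite eqr_nat => /eqP.
Qed.

Definition eval2 (a b : R) : {rmorphism {poly {poly R}} -> R} :=
  horner_eval b \o map_poly (horner_eval a).

Lemma eval2E a b (p : {poly {poly R}}) : eval2 a b p = (map_poly (horner_eval a) p).[b].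
Proof. by []. Qed.

Lemma eval2_cst (a b c : R) : eval2 a b c%:P%:P = c.
Proof. by rewrite eval2E map_polyC hornerC /= horner_evalE hornerC. Qed.

Lemma eval2_XC (a b : R) : eval2 a b 'X%:P = a.
Proof. by rewrite eval2E map_polyC hornerC /= horner_evalE hornerX. Qed.

Lemma eval2_X (a b : R) : eval2 a b 'X = b.
Proof. by rewrite eval2E map_polyX hornerX. Qed.

Lemma bipoly_exists_nonroot (p : {poly {poly R}}) : p != 0 ->
  exists a b, eval2 a b p != 0.
Proof.
move=> p0; have [a ha] : exists a, ~~ root (lead_coef p) a.
  by apply: poly_exists_nonroot; rewrite lead_coef_eq0.
have pa0 : map_poly (horner_eval a) p != 0.
  apply: contra ha => /eqP pa0; apply/eqP.
  by have := congr1 (coefp (size p).-1) pa0; rewrite /= coef_map coef0.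
by have [b hb] := poly_exists_nonroot pa0; exists a, b.
Qed.

Lemma bipoly_common_nonroot (I : finType) (P : I -> {poly {poly R}}) :
  exists a b, forall i, P i != 0 -> eval2 a b (P i) != 0.
Proof.
have [a [b hab]] : exists a b, eval2 a b (\prod_(i | P i != 0) P i) != 0.
  by apply/bipoly_exists_nonroot/prodf_neq0.
by exists a, b => i Pi; move: hab; rewrite rmorph_prod => /prodf_neq0; apply.
Qed.

End BivariateNonroot.

Section GenericDirection.
Variable R : realType.

Definition nonzero_unless_zero (F : R -> R -> R) (a b : R) : Prop :=
  (forall a' b', F a' b' = 0) \/ F a b != 0.

Definition bipoly_fun (F : R -> R -> R) : Prop :=
  exists P : {poly {poly R}}, forall a b, eval2 a b P = F a b.

Lemma common_generic_point (I : finType) (F : I -> R -> R -> R) :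
  (forall i, bipoly_fun (F i)) -> exists a b, forall i, nonzero_unless_zero (F i) a b.
Proof.
move=> /fin_all_exists [P PF].
have [a [b hab]] := bipoly_common_nonroot P.
exists a, b => i; have [P0|P0] := eqVneq (P i) 0.
  by left=> a' b'; rewrite -PF P0 rmorph0.
by right; rewrite -PF; apply: hab.
Qed.

Lemma bipoly_obl_norm2 p : bipoly_fun (fun a b => obl_norm2 id a b p).
Proof.
exists (obl_norm2 (fun c => c%:P%:P) 'X%:P 'X p) => a b.
by rewrite (rmorph_obl_norm2 (e' := id) (eval2_cst a b)) eval2_XC eval2_X.
Qed.

Lemma bipoly_obl_cross p q : bipoly_fun (fun a b => obl_cross id a b p q).
Proof.
exists (obl_cross (fun c => c%:P%:P) 'X%:P 'X p q) => a b.
by rewrite (rmorph_obl_cross (e' := id) (eval2_cst a b)) eval2_XC eval2_X.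
Qed.

Lemma bipoly_triple_form vi Ei vj Ej vk Ek :
  bipoly_fun (fun a b => triple_form id a b vi Ei vj Ej vk Ek).
Proof.
exists (triple_form (fun c => c%:P%:P) 'X%:P 'X vi Ei vj Ej vk Ek) => a b.
by rewrite (rmorph_triple_form (e' := id) (eval2_cst a b)) eval2_XC eval2_X.
Qed.

Lemma generic_direction_exists (n : nat) (v E : nat -> P3 R) : exists a b,
  forall i j k, (i < n)%N -> (j < n)%N -> (k < n)%N ->
  [/\ nonzero_unless_zero (fun a b => obl_norm2 id a b (E i)) a b,
      nonzero_unless_zero (fun a b => obl_cross id a b (sub3 (v j) (v k)) (E k)) a b &
      nonzero_unless_zero (fun a b => triple_form id a b (v i) (E i) (v j) (E j) (v k) (E k)) a b].
Proof.
pose F (x : 'I_n + 'I_n * 'I_n + 'I_n * 'I_n * 'I_n) : R -> R -> R :=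
  match x with
  | inl (inl i) => fun a b => obl_norm2 id a b (E i)
  | inl (inr (j, k)) => fun a b => obl_cross id a b (sub3 (v j) (v k)) (E k)
  | inr (i, j, k) => fun a b => triple_form id a b (v i) (E i) (v j) (E j) (v k) (E k)
  end.
have [|a [b hab]] := @common_generic_point _ F.
  by case=> [[i|[j k]]|[[i j] k]]; rewrite /F; [apply: bipoly_obl_norm2
    | apply: bipoly_obl_cross | apply: bipoly_triple_form].
exists a, b => i j k hi hj hk.
by split; [apply: (hab (inl (inl (Ordinal hi))))
  | apply: (hab (inl (inr (Ordinal hj, Ordinal hk))))
  | apply: (hab (inr (Ordinal hi, Ordinal hj, Ordinal hk)))].
Qed.

End GenericDirection.

Section ShearAlgebra.
Variable R : realType.

(* The hypotheses say that the lines [vi + R Ei], [vj + R Ej], [vk + R Ek] meet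
   the line [pi + R (-a, -b, 1)], at [pi], [pi + lam (-a, -b, 1)] and
   [pi + mu (-a, -b, 1)]: their projections along [(-a, -b, 1)] are concurrent.
   Tilting the direction of projection by [s] separates them. *)
Lemma triple_form_tilt (a b s t u r lam mu : R) (pi Ei Ej Ek vi vj vk : P3 R) :
  vi = mk3 (pi.1.1 - t * Ei.1.1) (pi.1.2 - t * Ei.1.2) (pi.2 - t * Ei.2) ->
  vj = mk3 (pi.1.1 - a * lam - u * Ej.1.1) (pi.1.2 - b * lam - u * Ej.1.2)
           (pi.2 + lam - u * Ej.2) ->
  vk = mk3 (pi.1.1 - a * mu - r * Ek.1.1) (pi.1.2 - b * mu - r * Ek.1.2)
           (pi.2 + mu - r * Ek.2) ->
  triple_form id (a - s * obl_x id a Ej) (b - s * obl_y id b Ej) vi Ei vj Ej vk Ek =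
  - s * mu * (1 - s * Ej.2) * obl_cross id a b Ej Ei * obl_cross id a b Ek Ej.
Proof. by move=> -> -> ->; rewrite /triple_form /obl_cross /obl_x /obl_y /sub3 /mk3 /=; ring. Qed.

Lemma obl_x_sub (a : R) (p q : P3 R) : obl_x id a (sub3 p q) = obl_x id a p - obl_x id a q.
Proof. by rewrite /obl_x /sub3 /=; ring. Qed.

Lemma obl_y_sub (b : R) (p q : P3 R) : obl_y id b (sub3 p q) = obl_y id b p - obl_y id b q.
Proof. by rewrite /obl_y /sub3 /=; ring. Qed.

Lemma obl_norm2_eq0 (E : P3 R) :
  (forall a b, obl_norm2 id a b E = 0) -> E = mk3 0 0 0.
Proof.
move=> E0; have := E0 0 0; have := E0 1 0; rewrite /obl_norm2 /obl_x /obl_y /=.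
rewrite !mul0r !addr0 mul1r => h10 h00.
have [x0 y0] : E.1.1 = 0 /\ E.1.2 = 0.
  by split; apply/eqP; rewrite -sqrf_eq0 eq_le sqr_ge0 andbT; nra.
have : (E.1.1 + E.2) ^+ 2 = 0 by nra.
move/eqP; rewrite sqrf_eq0 x0 add0r => /eqP z0.
by rewrite (mk3E E) x0 y0 z0.
Qed.

Lemma scale_of_obl_cross_eq0 (a b t : R) (D E : P3 R) :
  (forall a' b', obl_cross id a' b' D E = 0) ->
  obl_x id a D = t * obl_x id a E -> obl_y id b D = t * obl_y id b E ->
  obl_x id a E != 0 \/ obl_y id b E != 0 ->
  D = mk3 (t * E.1.1) (t * E.1.2) (t * E.2).
Proof.
move=> DE0; have := DE0 1 0; have := DE0 0 1; have := DE0 0 0.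
rewrite /obl_cross /obl_x /obl_y /= => c00 c01 c10 ex ey hE.
have hz : D.2 - t * E.2 = 0.
  have h1 : (D.2 - t * E.2) * (E.1.1 + a * E.2) = 0 by nra.
  have h2 : (D.2 - t * E.2) * (E.1.2 + b * E.2) = 0 by nra.
  by case: hE => hE; apply: (mulIf hE); rewrite mul0r.
by rewrite (mk3E D) /mk3; congr ((_, _), _); nra.
Qed.

Lemma triple_form_not_generic (a b t u r lam mu : R) (pi Ei Ej Ek vi vj vk : P3 R) :
  vi = mk3 (pi.1.1 - t * Ei.1.1) (pi.1.2 - t * Ei.1.2) (pi.2 - t * Ei.2) ->
  vj = mk3 (pi.1.1 - a * lam - u * Ej.1.1) (pi.1.2 - b * lam - u * Ej.1.2)
           (pi.2 + lam - u * Ej.2) ->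
  vk = mk3 (pi.1.1 - a * mu - r * Ek.1.1) (pi.1.2 - b * mu - r * Ek.1.2)
           (pi.2 + mu - r * Ek.2) ->
  mu != 0 -> obl_cross id a b Ej Ei != 0 -> obl_cross id a b Ek Ej != 0 ->
  ~ nonzero_unless_zero (fun a b => triple_form id a b vi Ei vj Ej vk Ek) a b.
Proof.
move=> hvi hvj hvk mu0 cji ckj; have tilt := triple_form_tilt _ hvi hvj hvk.
case=> [vanish | /eqP []]; last first.
  by have := tilt 0; rewrite !mul0r !subr0 => ->; rewrite oppr0 !mul0r.
pose s : R := if Ej.2 >= 0 then -1 else 1.
have s0 : s != 0 by rewrite /s; case: ifP => _; rewrite ?oppr_eq0 oner_eq0.
have s1 : 1 - s * Ej.2 != 0.
  by rewrite /s; case: ifP => z0; apply/eqP; [lra | move/negbT: z0; rewrite -ltNge; lra].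
move/eqP: (tilt s); rewrite vanish eq_sym !mulf_eq0 oppr_eq0.
by rewrite (negPf s0) (negPf mu0) (negPf s1) (negPf cji) (negPf ckj).
Qed.

End ShearAlgebra.

Lemma proportional_of_cross_eq0 (F : fieldType) (d1 d2 f1 f2 : F) :
  (d1 != 0) || (d2 != 0) -> d1 * f2 - d2 * f1 = 0 ->
  exists k, f1 = k * d1 /\ f2 = k * d2.
Proof.
move=> hd /eqP; rewrite subr_eq0 => /eqP e.
case/orP: hd => hd; [exists (f1 / d1) | exists (f2 / d2)]; split; try by field.
- by apply: (mulfI hd); rewrite e; field.
- by apply: (mulfI hd); rewrite -e; field.
Qed.

Section PlaneSegments.
Variable R : realType.
Implicit Types (P Q X Y : P2 R).

Definition segment P Q : set (P2 R) :=
  [set X | exists t, 0 <= t <= 1 /\ X = lerp2 P Q t].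

Definition cross2 P P' Q Q' : R :=
  (P'.1 - P.1) * (Q'.2 - Q.2) - (P'.2 - P.2) * (Q'.1 - Q.1).

Lemma lerp2_0 P Q : lerp2 P Q 0 = P.
Proof. by case: P => ? ?; rewrite /lerp2 /=; congr (_, _); ring. Qed.

Lemma lerp2_1 P Q : lerp2 P Q 1 = Q.
Proof. by case: Q => ? ?; rewrite /lerp2 /=; congr (_, _); ring. Qed.

Lemma segment_start P Q : segment P Q P.
Proof. by exists 0; rewrite lerp2_0; split => //; lra. Qed.

Lemma segment_end P Q : segment P Q Q.
Proof. by exists 1; rewrite lerp2_1; split => //; lra. Qed.

Lemma cross2_eq0_of_common_points P P' Q Q' X Y :
  segment P P' X -> segment Q Q' X -> segment P P' Y -> segment Q Q' Y ->
  X <> Y -> cross2 P P' Q Q' = 0.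
Proof.
case: P P' Q Q' X Y => [p1 p2] [p1' p2'] [q1 q2] [q1' q2'] [x1 x2] [y1 y2].
move=> [t [_ /pairE [hx1 hx2]]] [u [_ /pairE [hx3 hx4]]].
move=> [t' [_ /pairE [hy1 hy2]]] [u' [_ /pairE [hy3 hy4]]] XY.
rewrite /cross2 /=; simpl in *.
have uu' : u - u' != 0.
  by rewrite subr_eq0; apply/eqP => uu'; apply: XY; rewrite hx3 hx4 hy3 hy4 uu'.
have e1 : (u - u') * (q1' - q1) = (t - t') * (p1' - p1) by lra.
have e2 : (u - u') * (q2' - q2) = (t - t') * (p2' - p2) by lra.
apply: (mulfI uu'); rewrite mulr0.
transitivity ((p1' - p1) * ((u - u') * (q2' - q2)) - (p2' - p2) * ((u - u') * (q1' - q1))).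
  by ring.
by rewrite e1 e2; ring.
Qed.

Lemma unit_param_cases (t u k : R) : 0 <= t <= 1 -> 0 <= u <= 1 -> k != 0 ->
  [\/ 0 <= u - t / k <= 1, 0 <= t - u * k <= 1 | 0 <= t + (1 - u) * k <= 1].
Proof.
move=> /andP [t0 t1] /andP [u0 u1] k0.
have : t / k * k = t by field.
move: (t / k) => w hw.
case: (ltrgtP k 0) => hk; last by move: k0; rewrite hk eqxx.
- case: (lerP 0 (t + (1 - u) * k)) => h; first by apply: Or33; apply/andP; split; nra.
  by apply: Or31; apply/andP; split; nra.
- case: (lerP (u * k) t) => h; first by apply: Or32; apply/andP; split; nra.
  by apply: Or31; apply/andP; split; nra.
Qed.

Lemma parallel_segments_meet P P' Q Q' X : P <> P' -> Q <> Q' ->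
  cross2 P P' Q Q' = 0 -> segment P P' X -> segment Q Q' X ->
  [\/ segment Q Q' P, segment P P' Q | segment P P' Q'].
Proof.
case: P P' Q Q' X => [p1 p2] [p1' p2'] [q1 q2] [q1' q2'] [x1 x2].
move=> PP' QQ'; rewrite /cross2 /= => hc.
move=> [t [ht /pairE [hx1 hx2]]] [u [hu /pairE [hx3 hx4]]]; simpl in *.
have hd : (p1' - p1 != 0) || (p2' - p2 != 0).
  rewrite -negb_and; apply/negP => /andP [/eqP h1 /eqP h2]; apply: PP'.
  by congr (_, _); lra.
have [k [hk1 hk2]] := proportional_of_cross_eq0 hd hc.
have k0 : k != 0.
  by apply/eqP => k0; apply: QQ'; rewrite k0 !mul0r in hk1 hk2; congr (_, _); lra.
have eq1 : q1' = q1 + k * (p1' - p1) by lra.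
have eq2 : q2' = q2 + k * (p2' - p2) by lra.
rewrite eq1 eq2 in hx3 hx4 *.
have -> : q1 = p1 + (t - u * k) * (p1' - p1) by lra.
have -> : q2 = p2 + (t - u * k) * (p2' - p2) by lra.
case: (unit_param_cases ht hu k0) => hs; [apply: Or31; exists (u - t / k)
  | apply: Or32; exists (t - u * k) | apply: Or33; exists (t + (1 - u) * k)];
  by split => //; rewrite /lerp2 /=; apply/pairE; split; field.
Qed.

Lemma consecutive_segments_meet P P' P'' X : P <> P' -> P' <> P'' ->
  segment P P' X -> segment P' P'' X -> X <> P' ->
  segment P' P'' P \/ segment P P' P''.
Proof.
move=> PP' P'P'' hX1 hX2 XP'.
have := cross2_eq0_of_common_points hX1 hX2 (segment_end P P') (segment_start P' P'') XP'.
move: PP' P'P'' hX1 hX2 XP'.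
case: P P' P'' X => [p1 p2] [p1' p2'] [p1'' p2''] [x1 x2].
move=> PP' P'P'' [t [ht /pairE [hx1 hx2]]] [u [hu /pairE [hx3 hx4]]] XP'.
rewrite /cross2 /= => hc; simpl in *.
have hd : (p1' - p1 != 0) || (p2' - p2 != 0).
  rewrite -negb_and; apply/negP => /andP [/eqP h1 /eqP h2]; apply: PP'.
  by congr (_, _); lra.
have [k [hk1 hk2]] := proportional_of_cross_eq0 hd hc.
have eq1 : p1'' = p1' + k * (p1' - p1) by lra.
have eq2 : p2'' = p2' + k * (p2' - p2) by lra.
rewrite eq1 eq2 in hx3 hx4 *.
have tuk : t - 1 - u * k = 0.
  by case/orP: hd => hd; apply: (mulIf hd); rewrite mul0r; nra.
have u0 : 0 < u.
  rewrite lt_neqAle eq_sym; case/andP: hu => -> _; rewrite andbT.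
  by apply/eqP => u0; apply: XP'; rewrite hx3 hx4 u0; congr (_, _); ring.
case: (lerP 0 (1 + k)) => hk; [right; exists (1 + k) | left; exists (- k^-1)].
- by split; [apply/andP; split; nra | rewrite /lerp2 /=; apply/pairE; split; ring].
- have k0 : k != 0 by apply/eqP => k0; move: hk; rewrite k0; lra.
  split; last by rewrite /lerp2 /=; apply/pairE; split; field.
  have : k^-1 * k = 1 by rewrite mulVf.
  move: (k^-1) => w hw.
  apply/andP; split; nra.
Qed.

End PlaneSegments.

Section CyclicIndices.
Local Open Scope nat_scope.

Lemma succ_mod_cases n i : i < n ->
  (i.+1 < n /\ i.+1 %% n = i.+1) \/ (i.+1 = n /\ i.+1 %% n = 0).
Proof.
move=> lt_in; case: (ltnP i.+1 n) => h; first by left; rewrite modn_small.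
have e : i.+1 = n by lia.
by right; rewrite e modnn.
Qed.

Lemma succ_modn n i : (i %% n).+1 %% n = i.+1 %% n.
Proof. by rewrite -addn1 modnDml addn1. Qed.

Lemma neq_succ_mod n i : 1 < n -> i < n -> i <> i.+1 %% n.
Proof. by move=> n1 lt_in; case: (succ_mod_cases lt_in) => [[? ->]|[? ->]]; lia. Qed.

Lemma succ_mod_inj n i j : i < n -> j < n -> i.+1 %% n = j.+1 %% n -> i = j.
Proof.
move=> lt_in lt_jn.
by case: (succ_mod_cases lt_in) => [[? ->]|[? ->]];
  case: (succ_mod_cases lt_jn) => [[? ->]|[? ->]]; lia.
Qed.

Lemma neq_succ2_mod n i : 2 < n -> i < n -> i <> (i.+1 %% n).+1 %% n.
Proof.
move=> n2 lt_in; rewrite succ_modn.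
case: (succ_mod_cases lt_in) => [[lt_i1n _]|[e _]].
  by case: (succ_mod_cases lt_i1n) => [[? ->]|[? ->]]; lia.
by rewrite -e -[i.+2]/(1 + i.+1) modnDr modn_small; lia.
Qed.

Lemma pred_modn_val n i : i < n -> (i + n).-1 %% n = if i == 0 then n.-1 else i.-1.
Proof.
move=> lt_in; case: eqP => [->|i0]; first by rewrite add0n modn_small; lia.
have -> : (i + n).-1 = i.-1 + n by lia.
by rewrite modnDr modn_small; lia.
Qed.

Lemma succ_pred_modn n i : i < n -> ((i + n).-1 %% n).+1 %% n = i.
Proof.
move=> lt_in; rewrite succ_modn prednK; last by lia.
by rewrite modnDr modn_small.
Qed.

Lemma nonadjacent_sym n i j : nonadjacent n i j -> nonadjacent n j i.
Proof. by case=> [ij [fij fji]]; split => // ji; apply: ij. Qed.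

End CyclicIndices.

Section ContinuityHelpers.
Variable R : realType.

Lemma continuous_pair (T U V : topologicalType) (f : T -> U) (g : T -> V) :
  continuous f -> continuous g -> continuous (fun x => (f x, g x)).
Proof. by move=> cf cg x; apply: cvg_pair; [exact: cf | exact: cg]. Qed.

Lemma continuous_fst (U V : topologicalType) : continuous (@fst U V).
Proof. by move=> x; exact: cvg_fst. Qed.

Lemma continuous_snd (U V : topologicalType) : continuous (@snd U V).
Proof. by move=> x; exact: cvg_snd. Qed.

Lemma continuous_compose (T U V : topologicalType) (f : T -> U) (g : U -> V) :
  continuous f -> continuous g -> continuous (g \o f).
Proof. by move=> cf cg x; exact: continuous_comp (cf x) (cg (f x)). Qed.

Lemma continuous_addr (T : topologicalType) (f g : T -> R) :
  continuous f -> continuous g -> continuous (fun x => f x + g x).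
Proof. by move=> cf cg x; exact: (@continuousD R R^o T f g x (cf x) (cg x)). Qed.

Lemma continuous_subr (T : topologicalType) (f g : T -> R) :
  continuous f -> continuous g -> continuous (fun x => f x - g x).
Proof. by move=> cf cg x; exact: (@continuousB R R^o T f g x (cf x) (cg x)). Qed.

Lemma continuous_mulr (T : topologicalType) (f g : T -> R) :
  continuous f -> continuous g -> continuous (fun x => f x * g x).
Proof. by move=> cf cg x; exact: (@continuousM R T f g x (cf x) (cg x)). Qed.

End ContinuityHelpers.

Section GenericShadow.
Local Open Scope classical_set_scope.
Variables (R : realType) (K : seq (P3 R)).
Hypothesis HK : PL_knot K.
Variables a b : R.

Local Notation n := (size K).
Local Notation v i := (vtx3 K i).
Local Notation E i := (sub3 (vtx3 K i.+1) (vtx3 K i)).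

Definition proj (p : P3 R) : P2 R := (obl_x id a p, obl_y id b p).
Definition shadow : seq (P2 R) := map proj K.
Definition shadow_height (i : nat) (t : R) : R := (lerp3 (v i) (v i.+1) t).2.

Lemma size_ge3 : (3 <= n)%N. Proof. by case: HK. Qed.
Lemma size_gt1 : (1 < n)%N. Proof. exact: ltnW size_ge3. Qed.
Lemma size_gt0 : (0 < n)%N. Proof. exact: ltnW size_gt1. Qed.

Lemma lt_succ_mod i : (i.+1 %% n < n)%N.
Proof. exact: ltn_pmod size_gt0. Qed.

Lemma vtx3_mod i : vtx3 K (i %% n) = v i.
Proof. by rewrite /vtx3 modn_mod. Qed.

Lemma vtx3_succ_mod i : vtx3 K (i %% n).+1 = v i.+1.
Proof. by rewrite /vtx3 succ_modn. Qed.

Lemma size_shadow : size shadow = n. Proof. exact: size_map. Qed.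

Lemma vtx2_shadow i : vtx2 shadow i = proj (v i).
Proof. by rewrite /vtx2 size_shadow (nth_map (0, 0, 0)) // ltn_pmod // size_gt0. Qed.

Lemma edge2_shadow i : edge2 shadow i = segment (proj (v i)) (proj (v i.+1)).
Proof. by rewrite /edge2 /segment !vtx2_shadow. Qed.

Lemma proj_lerp3 p q t : proj (lerp3 p q t) = lerp2 (proj p) (proj q) t.
Proof. by rewrite /proj /lerp3 /lerp2 /obl_x /obl_y /=; congr (_, _); ring. Qed.

Lemma proj_inj p q : proj p = proj q -> p.2 = q.2 -> p = q.
Proof.
rewrite /proj /obl_x /obl_y => /pairE [h1 h2] h3.
by rewrite h3 in h1 h2; rewrite (mk3E p) (mk3E q); congr mk3; lra.
Qed.

Lemma vtx3_neq_succ i : (i < n)%N -> v i <> v i.+1.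
Proof. by case: HK => _ h _ _; apply: h. Qed.

Lemma follows_edges_meet i j : (i < n)%N -> (j < n)%N -> follows n i j ->
  edge3 K i `&` edge3 K j = [set v j].
Proof. by case: HK => _ _ h _; apply: h. Qed.

Lemma nonadjacent_edges_disjoint i j : (i < n)%N -> (j < n)%N -> nonadjacent n i j ->
  edge3 K i `&` edge3 K j = set0.
Proof. by case: HK => _ _ _ h; apply: h. Qed.

Lemma edge3_lerp i t : 0 <= t <= 1 -> edge3 K i (lerp3 (v i) (v i.+1) t).
Proof. by exists t. Qed.

Lemma edge3_vtx i : edge3 K i (v i).
Proof.
have -> : v i = lerp3 (v i) (v i.+1) 0.
  by rewrite [LHS]mk3E /lerp3 /lerp2 /mk3 /=; congr ((_, _), _); ring.
by apply: edge3_lerp; lra.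
Qed.

Lemma nonadjacent_heights_neq i j t u : (i < n)%N -> (j < n)%N -> nonadjacent n i j ->
  0 <= t <= 1 -> 0 <= u <= 1 ->
  proj (lerp3 (v i) (v i.+1) t) = proj (lerp3 (v j) (v j.+1) u) ->
  (lerp3 (v i) (v i.+1) t).2 <> (lerp3 (v j) (v j.+1) u).2.
Proof.
move=> lt_in lt_jn ij ht hu eproj eheight.
have /seteqP [sub _] := nonadjacent_edges_disjoint lt_in lt_jn ij.
apply: (sub (lerp3 (v i) (v i.+1) t)); split; first exact: edge3_lerp.
by rewrite (proj_inj eproj eheight); exact: edge3_lerp.
Qed.

Lemma vtx3_notin_edge j k : (j < n)%N -> (k < n)%N -> j <> k -> j <> (k.+1 %% n)%N ->
  ~ edge3 K k (v j).
Proof.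
move=> lt_jn lt_kn jk jk1 hjk.
case: (pselect (follows n j k)) => [fjk | nfjk].
  have /seteqP [sub _] := follows_edges_meet lt_jn lt_kn fjk.
  have /= vjk := sub (v j) (conj (edge3_vtx j) hjk).
  by apply: (vtx3_neq_succ lt_jn); rewrite vjk fjk vtx3_mod.
have /seteqP [sub _] := nonadjacent_edges_disjoint lt_kn lt_jn (conj (nesym jk) (conj jk1 nfjk)).
exact: (sub (v j) (conj hjk (edge3_vtx j))).
Qed.

Hypothesis generic_norm : forall i, (i < n)%N ->
  nonzero_unless_zero (fun a b => obl_norm2 id a b (E i)) a b.
Hypothesis generic_cross : forall j k, (j < n)%N -> (k < n)%N ->
  nonzero_unless_zero (fun a b => obl_cross id a b (sub3 (v j) (v k)) (E k)) a b.
Hypothesis generic_triple : forall i j k, (i < n)%N -> (j < n)%N -> (k < n)%N ->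
  nonzero_unless_zero (fun a b => triple_form id a b (v i) (E i) (v j) (E j) (v k) (E k)) a b.

Lemma proj_edge_neq0 i : (i < n)%N -> obl_x id a (E i) != 0 \/ obl_y id b (E i) != 0.
Proof.
move=> lt_in; case: (generic_norm lt_in) => [/obl_norm2_eq0 E0 | ].
  exfalso; apply: (vtx3_neq_succ lt_in); move/mk3_inj: E0 => [? ? ?].
  by rewrite (mk3E (v i)) (mk3E (v i.+1)); congr mk3; lra.
move=> gen; have [x0|] := eqVneq (obl_x id a (E i)) 0; last by left.
have [y0|] := eqVneq (obl_y id b (E i)) 0; last by right.
by move: gen; rewrite /obl_norm2 x0 y0 expr0n addr0 eqxx.
Qed.

Lemma proj_vtx_neq i : (i < n)%N -> proj (v i) <> proj (v i.+1).
Proof.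
move=> lt_in /pairE [ex ey].
by case: (proj_edge_neq0 lt_in); rewrite ?obl_x_sub ?obl_y_sub ?ex ?ey subrr eqxx.
Qed.

Lemma proj_vtx_notin_proj_edge j k : (j < n)%N -> (k < n)%N -> j <> k -> j <> (k.+1 %% n)%N ->
  ~ segment (proj (v k)) (proj (v k.+1)) (proj (v j)).
Proof.
move=> lt_jn lt_kn jk jk1 [t [ht]]; rewrite /lerp2 /proj /= => /pairE [ex ey].
have ex' : obl_x id a (sub3 (v j) (v k)) = t * obl_x id a (E k).
  by rewrite !obl_x_sub ex; ring.
have ey' : obl_y id b (sub3 (v j) (v k)) = t * obl_y id b (E k).
  by rewrite !obl_y_sub ey; ring.
case: (generic_cross lt_jn lt_kn) => [vanish | /eqP []]; last first.
  by rewrite /obl_cross ex' ey'; ring.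
have := scale_of_obl_cross_eq0 vanish ex' ey' (proj_edge_neq0 lt_kn).
move/mk3_inj; rewrite /= => -[? ? ?].
apply: (vtx3_notin_edge lt_jn lt_kn jk jk1); exists t; split => //.
by rewrite (mk3E (v j)) /lerp3 /lerp2 /mk3 /=; congr ((_, _), _); lra.
Qed.

Lemma proj_cross2_neq0 i j X : (i < n)%N -> (j < n)%N -> nonadjacent n i j ->
  segment (proj (v i)) (proj (v i.+1)) X -> segment (proj (v j)) (proj (v j.+1)) X ->
  cross2 (proj (v i)) (proj (v i.+1)) (proj (v j)) (proj (v j.+1)) <> 0.
Proof.
move=> lt_in lt_jn [ij [fij fji]] hXi hXj par.
case: (parallel_segments_meet (proj_vtx_neq lt_in) (proj_vtx_neq lt_jn) par hXi hXj).
- exact: proj_vtx_notin_proj_edge lt_in lt_jn ij fji.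
- exact: proj_vtx_notin_proj_edge lt_jn lt_in (nesym ij) fij.
- rewrite -(vtx3_mod j.+1); apply: (proj_vtx_notin_proj_edge (lt_succ_mod j) lt_in).
    by move=> ji; apply: fji.
  by move=> ji; apply: ij; apply: (succ_mod_inj lt_in lt_jn); rewrite ji.
Qed.

Lemma proj_consecutive_edges_meet i : (i < n)%N ->
  segment (proj (v i)) (proj (v i.+1)) `&` segment (proj (v i.+1)) (proj (v i.+2))
  = [set proj (v i.+1)].
Proof.
move=> lt_in; have lt_i1n := lt_succ_mod i.
apply/seteqP; split => [X [hX1 hX2] | X ->]; last by split; [apply: segment_end | apply: segment_start].
apply: contrapT => XP'.
have hv1 := proj_vtx_neq lt_i1n; rewrite vtx3_mod vtx3_succ_mod in hv1.
case: (consecutive_segments_meet (proj_vtx_neq lt_in) hv1 hX1 hX2 XP').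
  have := proj_vtx_notin_proj_edge lt_in lt_i1n (neq_succ_mod size_gt1 lt_in) (neq_succ2_mod size_ge3 lt_in).
  by rewrite vtx3_mod vtx3_succ_mod.
rewrite -(vtx3_mod i.+2) -succ_modn.
apply: (proj_vtx_notin_proj_edge (lt_succ_mod _) lt_in).
  by move=> e; apply: (neq_succ2_mod size_ge3 lt_in); rewrite e.
by move=> e; apply: (neq_succ_mod size_gt1 lt_i1n); rewrite e.
Qed.

Lemma shadow_follows_meet i j : (i < n)%N -> (j < n)%N -> follows n i j ->
  edge2 shadow i `&` edge2 shadow j = [set vtx2 shadow j].
Proof.
move=> lt_in _ ->.
by rewrite !edge2_shadow vtx2_shadow vtx3_mod vtx3_succ_mod proj_consecutive_edges_meet.
Qed.

Lemma proj_crossing_interior i j X : (i < n)%N -> (j < n)%N -> nonadjacent n i j ->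
  segment (proj (v i)) (proj (v i.+1)) X -> segment (proj (v j)) (proj (v j.+1)) X ->
  exists t, 0 < t < 1 /\ X = lerp2 (proj (v i)) (proj (v i.+1)) t.
Proof.
move=> lt_in lt_jn [ij [fij fji]] [t [/andP [t0 t1] eX]] hXj.
exists t; split => //; rewrite !lt_neqAle t0 t1 !andbT; apply/andP; split.
  apply/eqP => t0'; apply: (proj_vtx_notin_proj_edge lt_in lt_jn ij fji).
  by rewrite -[proj (v i)](lerp2_0 _ (proj (v i.+1))) t0' -eX.
apply/eqP => t1'; move: hXj; rewrite eX t1' lerp2_1 -(vtx3_mod i.+1).
apply: (proj_vtx_notin_proj_edge (lt_succ_mod i) lt_jn).
  by move=> e; apply: fij.
by move=> e; apply: ij; apply: (succ_mod_inj lt_in lt_jn).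
Qed.

Lemma shadow_crossing i j : (i < n)%N -> (j < n)%N -> nonadjacent n i j ->
  forall p, edge2 shadow i p -> edge2 shadow j p ->
    [/\ edge_interior2 shadow i p, edge_interior2 shadow j p &
        forall p', edge2 shadow i p' -> edge2 shadow j p' -> p' = p].
Proof.
move=> lt_in lt_jn ij p; rewrite !edge2_shadow => hpi hpj.
rewrite /edge_interior2 !vtx2_shadow; split.
- exact: proj_crossing_interior ij hpi hpj.
- exact: proj_crossing_interior (nonadjacent_sym ij) hpj hpi.
move=> p' hpi' hpj'; apply: contrapT => p'p.
exact: (proj_cross2_neq0 lt_in lt_jn ij hpi hpj (cross2_eq0_of_common_points hpi hpj hpi' hpj' (nesym p'p))).
Qed.

Lemma proj_no_triple_follows i j k X : (i < n)%N -> (j < n)%N -> (k < n)%N ->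
  follows n i j -> k <> i -> k <> j ->
  segment (proj (v i)) (proj (v i.+1)) X -> segment (proj (v j)) (proj (v j.+1)) X ->
  ~ segment (proj (v k)) (proj (v k.+1)) X.
Proof.
move=> lt_in lt_jn lt_kn fij ki kj hXi hXj.
have -> : X = proj (v j).
  have /seteqP [sub _] := proj_consecutive_edges_meet lt_in.
  move: hXj; rewrite fij vtx3_mod vtx3_succ_mod => hXj.
  exact: (sub X (conj hXi hXj)).
apply: (proj_vtx_notin_proj_edge lt_jn lt_kn (nesym kj)).
by move=> jk; apply: ki; apply: (succ_mod_inj lt_kn lt_in); rewrite -jk.
Qed.

Lemma obl_cross_proj i j :
  obl_cross id a b (E i) (E j) = cross2 (proj (v i)) (proj (v i.+1)) (proj (v j)) (proj (v j.+1)).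
Proof. by rewrite /obl_cross /cross2 /proj !obl_x_sub !obl_y_sub. Qed.

Lemma proj_no_triple_nonadjacent i j k X : (i < n)%N -> (j < n)%N -> (k < n)%N ->
  nonadjacent n i j -> nonadjacent n i k -> nonadjacent n j k ->
  segment (proj (v i)) (proj (v i.+1)) X -> segment (proj (v j)) (proj (v j.+1)) X ->
  ~ segment (proj (v k)) (proj (v k.+1)) X.
Proof.
move=> lt_in lt_jn lt_kn ij ik jk hXi hXj hXk.
have cji : obl_cross id a b (E j) (E i) != 0.
  by apply/eqP; rewrite obl_cross_proj; exact: proj_cross2_neq0 (nonadjacent_sym ij) hXj hXi.
have ckj : obl_cross id a b (E k) (E j) != 0.
  by apply/eqP; rewrite obl_cross_proj; exact: proj_cross2_neq0 (nonadjacent_sym jk) hXk hXj.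
case: hXi => t [ht]; rewrite -proj_lerp3; set Pi := lerp3 _ _ t => eXi.
case: hXj => u [hu]; rewrite -proj_lerp3; set Pj := lerp3 _ _ u => eXj.
case: hXk => r [hr]; rewrite -proj_lerp3; set Pk := lerp3 _ _ r => eXk.
have mu0 : Pk.2 - Pi.2 != 0.
  rewrite subr_eq0; apply/eqP => /esym.
  by apply: (nonadjacent_heights_neq lt_in lt_kn ik ht hr); rewrite -eXi -eXk.
move: eXj eXk; rewrite eXi /proj /obl_x /obl_y => /pairE [xj yj] /pairE [xk yk].
apply: (triple_form_not_generic (t := t) (u := u) (r := r) (lam := Pj.2 - Pi.2) (pi := Pi)
  _ _ _ mu0 cji ckj (generic_triple lt_in lt_jn lt_kn)).
- by rewrite [LHS]mk3E /Pi /=; congr mk3; ring.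
- by move: xj yj; rewrite /Pi /Pj /= => xj yj; rewrite [LHS]mk3E; congr mk3; lra.
- by move: xk yk; rewrite /Pi /Pk /= => xk yk; rewrite [LHS]mk3E; congr mk3; lra.
Qed.

Lemma shadow_no_triple i j k : (i < n)%N -> (j < n)%N -> (k < n)%N ->
  i <> j -> j <> k -> i <> k ->
  edge2 shadow i `&` edge2 shadow j `&` edge2 shadow k = set0.
Proof.
move=> lt_in lt_jn lt_kn ij jk ik; apply/seteqP; split => // X.
rewrite /= !edge2_shadow => -[[hXi hXj] hXk].
case: (pselect (follows n i j)) => fij.
  exact: proj_no_triple_follows lt_in lt_jn lt_kn fij (nesym ik) (nesym jk) hXi hXj hXk.
case: (pselect (follows n j i)) => fji.
  exact: proj_no_triple_follows lt_jn lt_in lt_kn fji (nesym jk) (nesym ik) hXj hXi hXk.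
case: (pselect (follows n i k)) => fik.
  exact: proj_no_triple_follows lt_in lt_kn lt_jn fik (nesym ij) jk hXi hXk hXj.
case: (pselect (follows n k i)) => fki.
  exact: proj_no_triple_follows lt_kn lt_in lt_jn fki jk (nesym ij) hXk hXi hXj.
case: (pselect (follows n j k)) => fjk.
  exact: proj_no_triple_follows lt_jn lt_kn lt_in fjk ij ik hXj hXk hXi.
case: (pselect (follows n k j)) => fkj.
  exact: proj_no_triple_follows lt_kn lt_jn lt_in fkj ik ij hXk hXj hXi.
exact: proj_no_triple_nonadjacent lt_in lt_jn lt_kn (conj ij (conj fij fji))
  (conj ik (conj fik fki)) (conj jk (conj fjk fkj)) hXi hXj hXk.
Qed.

Lemma shadow_planar_stick_polygon : planar_stick_polygon shadow.
Proof.
rewrite /planar_stick_polygon size_shadow; split.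
- exact: size_ge3.
- by move=> i lt_in; rewrite !vtx2_shadow; exact: proj_vtx_neq.
- exact: shadow_follows_meet.
- exact: shadow_crossing.
- exact: shadow_no_triple.
Qed.

Lemma shadow_stick_lift : stick_lift shadow shadow_height.
Proof.
rewrite /stick_lift size_shadow; split.
- move=> i _; apply: continuous_subspaceT; rewrite /shadow_height /lerp3 /=.
  have cid : continuous (fun t : R => t) by move=> ?; exact: cvg_id.
  apply: continuous_addr; apply: continuous_mulr => //; try exact: cst_continuous.
  by apply: continuous_subr => //; exact: cst_continuous.
- by move=> i lt_in; rewrite /shadow_height vtx3_mod vtx3_succ_mod /lerp3 /=; ring.
- move=> i j lt_in lt_jn ij t u ht hu; rewrite !vtx2_shadow -!proj_lerp3.
  exact: nonadjacent_heights_neq.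
Qed.

Definition shear (p : R * P3 R) : P3 R :=
  mk3 (p.2.1.1 - p.1 * a * p.2.2) (p.2.1.2 - p.1 * b * p.2.2) p.2.2.

Lemma shear1_proj p : shear (1, (proj p, p.2)) = p.
Proof. by rewrite [RHS]mk3E /shear /proj /obl_x /obl_y /=; congr mk3; ring. Qed.

Lemma continuous_shear : continuous shear.
Proof.
have cs : continuous (fun p : R * P3 R => p.1) by exact: continuous_fst.
have cp : continuous (fun p : R * P3 R => p.2) by exact: continuous_snd.
have cz : continuous (fun p : R * P3 R => p.2.2).
  exact: continuous_compose cp (@continuous_snd _ _).
have cxy : continuous (fun p : R * P3 R => p.2.1).
  exact: continuous_compose cp (@continuous_fst _ _).
have cx : continuous (fun p : R * P3 R => p.2.1.1).
  exact: continuous_compose cxy (@continuous_fst _ _).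
have cy : continuous (fun p : R * P3 R => p.2.1.2).
  exact: continuous_compose cxy (@continuous_snd _ _).
rewrite /shear /mk3; apply: continuous_pair; [apply: continuous_pair|] => //;
  apply: continuous_subr => //; apply: continuous_mulr => //;
  apply: continuous_mulr => //; exact: cst_continuous.
Qed.

Lemma shadow_lift_isotopic : ambient_isotopic (lift_set shadow shadow_height) (knot_set K).
Proof.
exists shear; split.
- exact: continuous_subspaceT continuous_shear.
- by move=> x; rewrite [RHS]mk3E /shear /=; congr mk3; ring.
- move=> s _; exists (fun x => shear (- s, x)); split.
  + apply: continuous_compose continuous_shear.
    by apply: continuous_pair; [exact: cst_continuous | move=> ?; exact: cvg_id].
  + by move=> x; rewrite [RHS]mk3E /shear /=; congr mk3; ring.
  + by move=> x; rewrite [RHS]mk3E /shear /=; congr mk3; ring.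
- apply/seteqP; split => [_ [_ [i [t [lt_in ht ->]]] <-] | _ [i [lt_in [t [ht ->]]]]].
  + exists i; split; first by rewrite -size_shadow.
    by exists t; split => //; rewrite !vtx2_shadow -proj_lerp3 shear1_proj.
  + exists (proj (lerp3 (v i) (v i.+1) t), shadow_height i t); last exact: shear1_proj.
    exists i, t; split => //; first by rewrite size_shadow.
    by rewrite !vtx2_shadow proj_lerp3.
Qed.

Lemma shadow_stick_diagram : stick_diagram_of K shadow shadow_height.
Proof.
split; [exact: shadow_planar_stick_polygon | exact: shadow_stick_lift
  | exact: shadow_lift_isotopic].
Qed.

End GenericShadow.

Section CrossingCount.
Local Open Scope nat_scope.

Lemma card_nonadjacent_row n (i : 'I_n) : 3 <= n ->
  #|[set j : 'I_n | `[< nonadjacent n i j >]]| <= n - 3.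
Proof.
move=> n3; have n0 : 0 < n by lia.
have lt_in := ltn_ord i.
pose succ := Ordinal (ltn_pmod i.+1 n0).
pose pred := Ordinal (ltn_pmod (i + n).-1 n0).
have card_adj : #|(i |: (succ |: [set pred]))| = 3.
  have isucc : (i : nat) <> i.+1 %% n by apply: neq_succ_mod lt_in; lia.
  have ipred : (i : nat) <> (i + n).-1 %% n by rewrite (pred_modn_val lt_in); case: eqP; lia.
  have succpred : i.+1 %% n <> (i + n).-1 %% n.
    by rewrite (pred_modn_val lt_in); case: (succ_mod_cases lt_in) => [[? ->]|[? ->]];
      case: eqP; lia.
  rewrite !cardsU1 cards1 !inE.
  have -> : (i == succ) = false by apply/eqP => /(congr1 val).
  have -> : (i == pred) = false by apply/eqP => /(congr1 val).
  by have -> : (succ == pred) = false by apply/eqP => /(congr1 val).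
have sub : [set j : 'I_n | `[< nonadjacent n i j >]] \subset ~: (i |: (succ |: [set pred])).
  apply/fintype.subsetP => j; rewrite inE => /asboolP [ij [fij fji]]; rewrite !inE.
  rewrite !negb_or; apply/and3P; split; apply/eqP => e.
  - by apply: ij; rewrite e.
  - by apply: fij; rewrite /follows e.
  - by apply: fji; rewrite /follows e /= succ_pred_modn.
apply: leq_trans (subset_leq_card sub) _.
by rewrite cardsCs finset.setCK card_ord card_adj.
Qed.

Lemma card_nonadjacent_pairs n : 3 <= n ->
  #|[set p : 'I_n * 'I_n | `[< nonadjacent n p.1 p.2 >]]| <= n * (n - 3).
Proof.
move=> n3; rewrite -sum1dep_card.
rewrite -(pair_big_dep xpredT (fun i j : 'I_n => `[< nonadjacent n i j >]) (fun _ _ => 1)) /=.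
rewrite -[n in n * _]card_ord -sum_nat_const; apply: leq_sum => i _.
by rewrite sum1dep_card; apply: card_nonadjacent_row.
Qed.

(* Each crossing is an unordered pair of nonadjacent edges. *)
Lemma ncrossings_double_le (R : realType) (q : seq (P2 R)) : 3 <= size q ->
  (ncrossings q).*2 <= size q * (size q - 3).
Proof.
rewrite /ncrossings; set n := size q => n3.
set A := [set p : 'I_n * 'I_n | (p.1 < p.2) && `[< nonadjacent n p.1 p.2 >]].
pose swap (p : 'I_n * 'I_n) := (p.2, p.1).
have swapK : involutive swap by case.
have crossA : #|[set p : 'I_n * 'I_n | (p.1 < p.2) &&
    `[< nonadjacent n p.1 p.2 /\ exists x, edge2 q p.1 x /\ edge2 q p.2 x >]]%classic| <= #|A|.
  apply/subset_leq_card/fintype.subsetP => p; rewrite !inE => /andP [-> /asboolP [? _]].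
  exact/asboolP.
have AU : A :|: swap @: A \subset [set p : 'I_n * 'I_n | `[< nonadjacent n p.1 p.2 >]].
  apply/fintype.subsetP => p; rewrite finset.in_setU => /orP [|/imsetP [p' + ->]].
    by rewrite !inE => /andP [_ /asboolP].
  by rewrite !inE /= => /andP [_ /asboolP/nonadjacent_sym].
have disj : A :&: swap @: A = finset.set0.
  apply/finset.setP => p; rewrite !inE; apply/negP => /andP [/andP [lt_p _] /imsetP [p' + e]].
  by rewrite !inE => /andP [lt_p' _]; move: lt_p; rewrite e /=; lia.
have := cardsUI A (swap @: A); rewrite disj cards0 addn0 card_imset; last exact: inv_inj.
move=> cardU; rewrite -addnn; apply: leq_trans (leq_add crossA crossA) _.
by rewrite -cardU; apply: leq_trans (subset_leq_card AU) _; exact: card_nonadjacent_pairs.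
Qed.

End CrossingCount.

Lemma stick_bound_of_crossings (R : realType) (c : R) (m N : nat) :
  c <= m%:R -> (m.*2 <= N * (N - 3))%N -> (3 <= N)%N ->
  (3 + Num.sqrt (9 + 8 * c)) / 2 <= N%:R.
Proof.
move=> cm mN N3; rewrite -(ler_nat R) -muln2 !natrM natrB // in mN.
have {}N3 : (3 : R) <= N%:R by rewrite (ler_nat R 3 N).
suff : Num.sqrt (9 + 8 * c) <= 2 * N%:R - 3 by lra.
rewrite -(ger0_norm (_ : 0 <= 2 * N%:R - 3)); last by lra.
by rewrite -sqrtr_sqr; apply: ler_wsqrtr; rewrite expr2; nra.
Qed.

Lemma stick_diagram_size_bound (R : realType) (K : seq (P3 R)) (q : seq (P2 R))
    (h : nat -> R -> R) :
  stick_diagram_of K q h ->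
  (3 + Num.sqrt (9 + 8 * crossing_number K)) / 2 <= (size q)%:R.
Proof.
move=> D; have q3 : (3 <= size q)%N by case: D => [[]].
apply: (stick_bound_of_crossings _ (ncrossings_double_le q3) q3).
apply: ge_inf; last by exists q, h.
by exists 0 => _ [? [? [_ ->]]]; exact: ler0n.
Qed.

Lemma stick_diagram_exists (R : realType) (K : seq (P3 R)) :
  PL_knot K -> exists q h, stick_diagram_of K q h.
Proof.
move=> HK; have [a [b gen]] := generic_direction_exists (size K) (vtx3 K)
  (fun i => sub3 (vtx3 K i.+1) (vtx3 K i)).
exists (shadow K a b), (shadow_height K); apply: shadow_stick_diagram => //.
- by move=> i lt_i; case: (gen i i i lt_i lt_i lt_i).
- by move=> j k lt_j lt_k; case: (gen j j k lt_j lt_j lt_k).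
- by move=> i j k lt_i lt_j lt_k; case: (gen i j k lt_i lt_j lt_k).
Qed.

Theorem theorem2p2 (R : realType) (K : seq (P3 R)) :
  PL_knot K ->
  (3 + Num.sqrt (9 + 8 * crossing_number K)) / 2 <= planar_stick_index K.
Proof.
move=> /stick_diagram_exists [q [h D]]; apply: lb_le_inf.
  by exists (size q)%:R, q, h.
by move=> _ [q' [h' [D' ->]]]; exact: stick_diagram_size_bound D'.
Qed.
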